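(* Let $n\ge1$ and $1\le r\le n$ be integers, let $f:\mathbb{I}_n^r\to\mathbb{R}^+$ be an arbitrary function, and let $X$ be a real number with $X>\max_{J,J'\in\mathbb{I}_n^r}|f(J)-f(J')|$. Then the function $\tilde f:\mathbb{I}_n^r\to\mathbb{R}^+$ defined by $\tilde f(J)=|J|(n-|J|)X+|J|f(J)$ is graded.
   Context: $\mathbb{R}^+$ denotes the positive reals. For integers $i\le j$, $[i:j]=\{i,\dots,j\}$. For integers $r\le n$, $\mathbb{I}_n^r=\{[i:j]:1\le i\le j\le n,\ j<i+r\}$. A function $f:\mathbb{I}_n^r\to\mathbb{R}^+$ is graded if for all $J,J'\in\mathbb{I}_n^r$ with $|J|<|J'|$ one has $f(J)/|J|>f(J')/|J'|$. *)

From Stdlib Require Import Reals Lra Lia.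
Open Scope R_scope.

(* An interval [i:j] = {i,...,j} is represented by the pair of its endpoints
   (i, j).  [inI n r i j] says [i:j] belongs to I_n^r:
   1 <= i <= j <= n and j < i + r. *)
Definition inI (n r i j : nat) : Prop :=
  (1 <= i)%nat /\ (i <= j)%nat /\ (j <= n)%nat /\ (j < i + r)%nat.

Definition icard (i j : nat) : nat := (j - i + 1)%nat.

Definition graded (n r : nat) (g : nat -> nat -> R) : Prop :=
  forall i j i' j' : nat,
    inI n r i j -> inI n r i' j' ->
    (icard i j < icard i' j')%nat ->
    g i j / INR (icard i j) > g i' j' / INR (icard i' j').

Definition ftilde (n : nat) (X : R) (f : nat -> nat -> R) : nat -> nat -> R :=
  fun i j => INR (icard i j) * (INR n - INR (icard i j)) * X
             + INR (icard i j) * f i j.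

(* Dividing by |J| gives ftilde(J)/|J| = (n - |J|) X + f(J): the first term drops
   by at least X from one size to the next, while f varies by less than X. *)
From Stdlib Require Import Reals Lra Lia.
Open Scope R_scope.

Lemma inI_icard_bounds (n r i j : nat) :
  inI n r i j -> (1 <= icard i j <= n)%nat.
Proof. unfold inI, icard; lia. Qed.

Lemma ftilde_div_icard (n : nat) (X : R) (f : nat -> nat -> R) (i j : nat) :
  (1 <= icard i j)%nat ->
  ftilde n X f i j / INR (icard i j) = (INR n - INR (icard i j)) * X + f i j.
Proof.
  intros Hk.
  assert (INR (icard i j) <> 0) by (apply not_0_INR; lia).
  unfold ftilde; field; assumption.
Qed.

Lemma ftilde_pos (n : nat) (X : R) (f : nat -> nat -> R) (i j : nat) :
  0 <= X -> (1 <= icard i j <= n)%nat -> 0 < f i j -> 0 < ftilde n X f i j.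
Proof.
  intros HX [Hk1 Hkn] Hf; unfold ftilde.
  assert (H1 : 1 <= INR (icard i j)) by (apply (le_INR 1); exact Hk1).
  assert (Hn : INR (icard i j) <= INR n) by (apply le_INR; exact Hkn).
  assert (0 <= INR (icard i j) * (INR n - INR (icard i j)) * X).
  { apply Rmult_le_pos; [apply Rmult_le_pos|]; lra. }
  assert (0 < INR (icard i j) * f i j) by (apply Rmult_lt_0_compat; lra).
  lra.
Qed.

Lemma affine_step_gt (m k k' X a a' : R) :
  0 <= X -> k + 1 <= k' -> a' - a < X ->
  (m - k) * X + a > (m - k') * X + a'.
Proof. intros; nra. Qed.

Theorem lemma6p4 (n r : nat) (f : nat -> nat -> R) (X : R) :
  (1 <= n)%nat -> (1 <= r)%nat -> (r <= n)%nat ->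
  (forall i j, inI n r i j -> 0 < f i j) ->
  (forall i j i' j', inI n r i j -> inI n r i' j' ->
     Rabs (f i j - f i' j') < X) ->
  (forall i j, inI n r i j -> 0 < ftilde n X f i j) /\
  graded n r (ftilde n X f).
Proof.
  intros _ _ _ Hpos Hosc.
  assert (HX : forall i j, inI n r i j -> 0 < X).
  { intros i j Hij; specialize (Hosc i j i j Hij Hij).
    rewrite Rminus_diag, Rabs_R0 in Hosc; exact Hosc. }
  split.
  - intros i j Hij.
    apply ftilde_pos.
    + apply Rlt_le, (HX i j Hij).
    + exact (inI_icard_bounds n r i j Hij).
    + exact (Hpos i j Hij).
  - intros i j i' j' Hij Hij' Hlt.
    rewrite !ftilde_div_icard
      by (eapply proj1, inI_icard_bounds; eassumption).
    apply affine_step_gt.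
    + apply Rlt_le, (HX i j Hij).
    + rewrite <- S_INR; apply le_INR; exact Hlt.
    + exact (Rle_lt_trans _ _ _ (RRle_abs _) (Hosc i' j' i j Hij' Hij)).
Qed.
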